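(* Let $p$ be an odd prime and $\sim$ a nontrivial equivalence relation on $\mathbb{Z}_p^\times$ such that $x \sim y$ and $x \neq y$ imply $(y-x) \sim (-x)$. Let $S$ be the union of some equivalence class with $\{0\}$. If $x,y$ and $z,w$ are two pairs of distinct elements of $S$ (i.e. $x \neq y$, $z\neq w$) with $x - y = z - w$, then $x = z$ and $y = w$. In other words, $S$ is a modular Golomb ruler.
   Context: A subset $S \subseteq \mathbb{Z}_p$ is a modular Golomb ruler if $0 \in S$ and for any $x\neq y$ and $z \neq w$ in $S$ with $x-y=z-w$ we have $x=z$ and $y=w$. An equivalence relation is nontrivial if it has at least two classes. *)

From HB Require Import structures.
From mathcomp Require Import all_boot all_order all_algebra.
Set Implicit Arguments. Unset Strict Implicit. Unset Printing Implicit Defensive.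
Import GRing.Theory.
Local Open Scope ring_scope.

Definition modular_golomb_ruler (p : nat) (S : {set 'F_p}) : Prop :=
  (0 \in S) /\
  forall x y z w, x \in S -> y \in S -> z \in S -> w \in S ->
    x != y -> z != w -> x - y = z - w -> x = z /\ y = w.

(* An equivalence relation on Z_p^x, encoded as a relation on Z_p supported
   on the nonzero elements. *)
Definition equiv_on_units (p : nat) (R : rel 'F_p) : Prop :=
  [/\ forall x y, R x y -> (x != 0) && (y != 0),
      forall x, x != 0 -> R x x,
      forall x y, R x y -> R y x &
      forall x y z, R x y -> R y z -> R x z].

Definition nontrivial_on_units (p : nat) (R : rel 'F_p) : Prop :=
  exists x y : 'F_p, [/\ x != 0, y != 0 & ~~ R x y].

From mathcomp Require Import all_boot all_order all_algebra.
From mathcomp Require Import ring.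

Set Implicit Arguments.
Unset Strict Implicit.
Unset Printing Implicit Defensive.

Import GRing.Theory.
Local Open Scope ring_scope.

(* Write C for the class of a and S = {0} ∪ C. If u ~ -u, the rule
   x ~ y => y - x ~ -x walks u ~ ku ~ -ku up through all multiples of u, so
   the relation would be trivial; hence -u is never in C, and neither is
   v - u ~ -u for distinct u, v in C. So a difference s - t of distinct
   elements of S lies in C exactly when t = 0, which settles every case of
   x - y = z - w except x, y, z, w in C with x <> z. There z - x = w - y
   chains -x ~ z - x ~ -y, and the rule applied to -x ~ -y puts x - y in C,
   a contradiction. *)

Section Multiples.

Variables (V : zmodType) (R : rel V).
Hypotheses (R_sym : symmetric R) (R_trans : transitive R)
  (R_sub : forall x y, R x y -> x != y -> R (y - x) (- x)).

Lemma R_mulrn_of_opp (u : V) : R u (- u) ->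
  forall k, u *+ k != 0 -> R u (u *+ k) && R u (- (u *+ k)).
Proof.
move=> uNu; have uu : R u u by apply: (R_trans uNu); rewrite R_sym.
elim=> [|k IHk]; first by rewrite mulr0n eqxx.
rewrite mulrS addr_eq0; have [->|uk0] := eqVneq (u *+ k) 0; first by rewrite addr0 uu.
case/andP: (IHk uk0) => u_uk u_Nuk u_neq; apply/andP; split.
- have Nuk_u : R (- (u *+ k)) u by rewrite R_sym.
  have := R_sub Nuk_u; rewrite eq_sym opprK => /(_ u_neq).
  by rewrite R_sym; apply: R_trans u_uk.
- have uk_Nu : R (u *+ k) (- u) by apply: R_trans uNu; rewrite R_sym.
  have := R_sub uk_Nu; rewrite eq_sym eqr_oppLR -opprD => /(_ u_neq).
  by rewrite R_sym; apply: R_trans u_Nuk.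
Qed.

End Multiples.

Section ClassRuler.

Variables (p : nat) (R : rel 'F_p) (a : 'F_p).
Hypotheses (R_equiv : equiv_on_units R) (R_nontriv : nontrivial_on_units R)
  (R_sub : forall x y, R x y -> x != y -> R (y - x) (- x)).

Let R_sym : symmetric R.
Proof. by case: R_equiv => _ _ sym _ x y; apply/idP/idP; apply: sym. Qed.

Let R_trans y x z : R x y -> R y z -> R x z.
Proof. by case: R_equiv => _ _ _ trans; apply: trans. Qed.

Lemma R_neq0 x y : R x y -> x != 0.
Proof. by case: R_equiv => supp _ _ _ /supp/andP[]. Qed.

Lemma not_R_opp u : ~~ R u (- u).
Proof.
apply/negP => uNu; have u0 := R_neq0 uNu.
have R_u y : y != 0 -> R u y.
  have -> : y = u *+ val (y / u) by rewrite -mulr_natl natr_Zp divfK.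
  by move/(R_mulrn_of_opp R_sym R_trans R_sub uNu)/andP => [].
case: R_nontriv => b [c [b0 c0 /negP[]]].
by apply: (@R_trans u); [rewrite R_sym|]; apply: R_u.
Qed.

Lemma class_neq0 u : R a u -> u != 0.
Proof. by rewrite R_sym => /R_neq0. Qed.

Lemma class_opp u : R a u -> ~~ R a (- u).
Proof. by move=> au; apply: contra (not_R_opp u); apply: R_trans; rewrite R_sym. Qed.

Lemma R_class_sub u v : R a u -> R a v -> u != v -> R (v - u) (- u).
Proof. by move=> au av; apply: R_sub; apply: R_trans av; rewrite R_sym. Qed.

Lemma class_sub u v : R a u -> R a v -> u != v -> ~~ R a (v - u).
Proof.
move=> au av uv; apply: contra (class_opp au) => /R_trans; apply.
exact: R_class_sub.
Qed.

Definition class_ruler : {set 'F_p} := 0 |: [set x | R a x].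

Lemma in_class_ruler s : (s \in class_ruler) = (s == 0) || R a s.
Proof. by rewrite !inE. Qed.

Lemma class_ruler_sub s t : s \in class_ruler -> t \in class_ruler ->
  s != t -> R a (s - t) = (t == 0).
Proof.
rewrite !in_class_ruler => /orP[/eqP-> | as_] /orP[/eqP-> | at_] st.
- by rewrite eqxx in st.
- by rewrite sub0r (negbTE (class_opp at_)) (negbTE (class_neq0 at_)).
- by rewrite subr0 as_ eqxx.
- by rewrite (negbTE (class_sub at_ as_ _)) ?(negbTE (class_neq0 at_)) // eq_sym.
Qed.

Lemma class_ruler_golomb : modular_golomb_ruler class_ruler.
Proof.
split=> [|x y z w Sx Sy Sz Sw xy zw e]; first by rewrite in_class_ruler eqxx.
have e' : y - x = w - z by rewrite -opprB e opprB.
have y0w0 : (y == 0) = (w == 0).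
  by rewrite -(class_ruler_sub Sx Sy xy) -(class_ruler_sub Sz Sw zw) e.
have x0z0 : (x == 0) = (z == 0).
  have [yx wz] : y != x /\ w != z by rewrite ![_ == x]eq_sym ![_ == z]eq_sym.
  by rewrite -(class_ruler_sub Sy Sx yx) -(class_ruler_sub Sw Sz wz) e'.
have [y0|y0] := eqVneq y 0.
  by move: y0w0 e; rewrite y0 eqxx => /esym/eqP->; rewrite !subr0.
have [x0|x0] := eqVneq x 0.
  by move: x0z0 e; rewrite x0 eqxx => /esym/eqP->; rewrite !sub0r => /oppr_inj.
have [xz|xz] := eqVneq x z; first by move: e; rewrite xz => /addrI/oppr_inj.
exfalso; rewrite !in_class_ruler (negbTE x0) (negbTE y0) in Sx Sy.
rewrite !in_class_ruler -x0z0 -y0w0 (negbTE x0) (negbTE y0) in Sz Sw.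
have e2 : z - x = w - y by rewrite -[z](subrK w) -e; ring.
have yw : y != w by apply: contraNneq xz => yw; rewrite eq_sym -subr_eq0 e2 yw subrr.
have NxNy : R (- x) (- y).
  apply: (@R_trans (z - x)); first by rewrite R_sym R_class_sub.
  by rewrite e2 R_class_sub.
have := R_sub NxNy; rewrite (inj_eq oppr_inj) => /(_ xy).
rewrite opprK addrC R_sym => /(R_trans Sx).
by apply/negP/class_sub; rewrite // eq_sym.
Qed.

End ClassRuler.

Theorem corollary3p21 (p : nat) (R : rel 'F_p) (a : 'F_p) :
  prime p -> odd p ->
  equiv_on_units R ->
  nontrivial_on_units R ->
  (forall x y, R x y -> x != y -> R (y - x) (- x)) ->
  a != 0 ->
  modular_golomb_ruler (0 |: [set x | R a x]).
Proof.
move=> _ _ R_equiv R_nontriv R_sub _.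
exact: class_ruler_golomb.
Qed.
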